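(* Let $Q\subset\mathbb{C}$ be an unshielded continuum with finest map $\varphi$ onto a locally connected continuum. If $a\in Q$ satisfies $\varphi^{-1}(\varphi(a))=\{a\}$, then $Q$ is locally connected at $a$.
   Context: $Q$ is unshielded if it equals the boundary of the component of $\widehat{\mathbb{C}}\setminus Q$ containing $\infty$. The finest map $\varphi$ of $Q$ is the monotone (continuous, connected fibers) surjection onto a locally connected continuum through which every monotone surjection of $Q$ onto a locally connected continuum factors via a monotone map. *)

(* The complex plane C is modelled as R * R
   (product topology) for an arbitrary R : realType. *)
From HB Require Import structures.
From mathcomp Require Import all_boot all_order all_algebra.
From mathcomp Require Import all_classical all_reals all_analysis.
Import numFieldNormedType.Exports.
Set Implicit Arguments. Unset Strict Implicit. Unset Printing Implicit Defensive.
Local Open Scope classical_set_scope.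
Local Open Scope ring_scope.

Section TopDefs.
Context {T : topologicalType}.

Definition continuum (A : set T) : Prop :=
  A !=set0 /\ compact A /\ connected A.

Definition open_in (A B : set T) : Prop :=
  exists W : set T, open W /\ B = A `&` W.

Definition locally_connected_at (A : set T) (a : T) : Prop :=
  forall U : set T, nbhs a U ->
    exists V : set T, [/\ open_in A V, connected V, V a & V `<=` U].

Definition locally_connected_set (A : set T) : Prop :=
  forall a, A a -> locally_connected_at A a.

Definition boundary (A : set T) : set T := closure A `\` interior A.

End TopDefs.

Definition monotone_onto {T U : topologicalType} (A : set T) (B : set U)
    (f : T -> U) : Prop :=
  [/\ {within A, continuous f}, f @` A = B &
      forall y, B y -> connected (A `&` f @^-1` [set y])].

(* Q is unshielded: Q is the boundary of the unbounded component of C \ Q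
   (i.e. of the component of the Riemann sphere minus Q containing oo) *)
Definition unshielded {R : realType} (Q : set (R * R)%type) : Prop :=
  exists x : (R * R)%type,
    ~ Q x /\ ~ bounded_set (connected_component (~` Q) x) /\
    Q = boundary (connected_component (~` Q) x).

Definition lc_continuum {R : realType} {Y : pseudoMetricType R} (Z : set Y)
  : Prop := hausdorff_space Y /\ continuum Z /\ locally_connected_set Z.

Definition finest_map {R : realType} {T : topologicalType} (Q : set T)
    {Y : pseudoMetricType R} (Z : set Y) (phi : T -> Y) : Prop :=
  lc_continuum Z /\ monotone_onto Q Z phi /\
  forall (Y' : pseudoMetricType R) (Z' : set Y') (psi : T -> Y'),
    lc_continuum Z' -> monotone_onto Q Z' psi ->
    exists h : Y -> Y', monotone_onto Z Z' h /\
                        forall x, Q x -> psi x = h (phi x).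

From HB Require Import structures.
From mathcomp Require Import all_boot all_order all_algebra.
From mathcomp Require Import all_classical all_reals all_analysis.
Import numFieldNormedType.Exports.
Set Implicit Arguments. Unset Strict Implicit. Unset Printing Implicit Defensive.
Local Open Scope classical_set_scope.
Local Open Scope ring_scope.

(* A monotone map phi of a compact space onto a Hausdorff space is closed, so
   preimages of connected sets are connected.  If the fibre over phi a is {a},
   every neighbourhood U of a contains the preimage of a neighbourhood of phi a
   (namely the complement of the closed set phi (Q \ U)); pulling back a
   connected open neighbourhood of phi a given by local connectedness of the
   image yields a connected relatively open neighbourhood of a inside U. *)

Lemma connected_subset_clopen_in (T : topologicalType) (A F B C D : set T) :
    connected F -> F `<=` A -> open C -> B = A `&` C -> closed D ->
    B = A `&` D -> F `&` B !=set0 -> F `<=` B.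
Proof.
move=> cF FA oC BC cD BD FB.
have FBC : F `&` B = F `&` C by rewrite BC setIA (setIidl FA).
have FBD : F `&` B = F `&` D by rewrite BD setIA (setIidl FA).
by apply/setIidPl/cF; [|exists C|exists D].
Qed.

Section MonotoneImage.
Variables (T Y : topologicalType) (Q : set T) (Z : set Y) (phi : T -> Y).
Hypotheses (hY : hausdorff_space Y) (cQ : compact Q).
Hypothesis (mono : monotone_onto Q Z phi).

Lemma monotone_image_closed (D : set T) : closed D -> closed (phi @` (Q `&` D)).
Proof.
case: mono => ct _ _ cD; apply: compact_closed => //.
apply: continuous_compact; last exact: compact_closedI.
by apply: continuous_subspaceW ct => x [].
Qed.

Lemma monotone_image_complement_open (C : set T) :
  open C -> open (~` (phi @` (Q `&` ~` C))).
Proof. by move=> oC; apply/closed_openC/monotone_image_closed/open_closedC. Qed.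

Lemma monotone_preimage_open_in (V : set Y) :
  open_in Z V -> open_in Q (Q `&` phi @^-1` V).
Proof.
case: mono => ct imQ _ [W [oW VW]].
have /open_subspaceP[G oG GQ] := proj1 (continuousP (phi : subspace Q -> Y)) ct W oW.
exists G; split => //; rewrite [Q `&` G]setIC GQ VW.
apply/seteqP; split => [x [Qx [_ Ox]]|x [Ox Qx]] //.
by do 2!split => //; rewrite -imQ; exists x.
Qed.

Lemma monotone_clopen_in_saturated (V : set Y) (B C D : set T) :
    open C -> B = Q `&` phi @^-1` V `&` C ->
    closed D -> B = Q `&` phi @^-1` V `&` D ->
  forall x y, (Q `&` phi @^-1` V) x -> B y -> phi x = phi y -> B x.
Proof.
case: mono => _ im fib oC BC cD BD x y [Qx Vx] By exy.
have [[Qy Vy] _] : (Q `&` phi @^-1` V `&` C) y by rewrite -BC.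
set F := Q `&` phi @^-1` [set phi y].
have Zy : Z (phi y) by rewrite -im; exists y.
have FP : F `<=` Q `&` phi @^-1` V by move=> z [Qz /= ->].
have FB : F `<=` B.
  apply: (connected_subset_clopen_in (fib _ Zy) FP oC BC cD BD).
  by exists y; split.
by apply: FB; split.
Qed.

Lemma image_preimage_setI (V : set Y) (E : set T) :
  phi @` (Q `&` phi @^-1` V `&` E) = V `&` phi @` (Q `&` E).
Proof.
apply/seteqP; split => [y [x [[Qx Vx] Ex] <-]|y [Vy [x [Qx Ex] xy]]].
  by split => //; exists x.
by exists x => //; do 2!split => //; rewrite /preimage /= xy.
Qed.

Lemma monotone_preimage_connected (V : set Y) :
  V `<=` Z -> connected V -> connected (Q `&` phi @^-1` V).
Proof.
move=> VZ cV B B0 [C oC BC] [D cD BD].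
have satB := monotone_clopen_in_saturated oC BC cD BD.
have BP : B `<=` Q `&` phi @^-1` V by rewrite BC => z [].
have imB : phi @` B = V.
  apply: cV.
  - by case: B0 => y By; exists (phi y), y.
  - exists (~` (phi @` (Q `&` ~` C))); first exact: monotone_image_complement_open.
    apply/seteqP; split => [_ [y By <-]|z [Vz nCz]].
      split; first by case: (BP _ By).
      move=> [w [Qw nCw] wy]; apply: nCw.
      have Bw : B w.
        by apply: (satB w y) => //; split => //; rewrite /preimage /= wy; case: (BP _ By).
      by move: Bw; rewrite BC => -[].
    have [w Qw wz] : (phi @` Q) z by case: mono => _ -> _; apply: VZ.
    have [Cw|nCw] := pselect (C w); last by case: nCz; exists w.
    by exists w => //; rewrite BC; split => //; split => //; rewrite /preimage /= wz.
  - exists (phi @` (Q `&` D)); first exact: monotone_image_closed.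
    by rewrite -image_preimage_setI -BD.
apply/seteqP; split => // x Px.
have [y By eyx] : (phi @` B) (phi x) by rewrite imB; case: Px.
exact: (satB x y).
Qed.

Lemma monotone_singleton_fiber_nbhs (a : T) (U : set T) :
    Q `&` phi @^-1` [set phi a] = [set a] -> nbhs a U ->
  exists2 W : set Y, open_nbhs (phi a) W & Q `&` phi @^-1` W `<=` U.
Proof.
move=> fa nU; exists (~` (phi @` (Q `&` ~` U°))).
  split; first exact/monotone_image_complement_open/open_interior.
  move=> [w [Qw nUw] wa]; apply: nUw.
  have : (Q `&` phi @^-1` [set phi a]) w by split.
  by rewrite fa => ->.
move=> x [Qx nUx]; apply: interior_subset.
by apply: contrapT => Ux; apply: nUx; exists x.
Qed.

Lemma monotone_locally_connected_at (a : T) : Q a ->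
    Q `&` phi @^-1` [set phi a] = [set a] ->
  locally_connected_at Z (phi a) -> locally_connected_at Q a.
Proof.
move=> Qa fa lcZ U /(monotone_singleton_fiber_nbhs fa)[W [oW Wa] WU].
have [V [oV cV Va VW]] := lcZ W (open_nbhs_nbhs (conj oW Wa)).
have VZ : V `<=` Z by case: oV => O [_ ->] z [].
exists (Q `&` phi @^-1` V); split.
- exact: monotone_preimage_open_in.
- exact: monotone_preimage_connected.
- by [].
- by move=> x [Qx Vx]; apply: WU; split => //; apply: VW.
Qed.

End MonotoneImage.

Theorem lemma3p7 (R : realType) (Q : set (R * R)%type)
    (Y : pseudoMetricType R) (Z : set Y) (phi : (R * R)%type -> Y) :
  continuum Q -> unshielded Q -> finest_map Q Z phi ->
  forall a : (R * R)%type, Q a ->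
    Q `&` phi @^-1` [set phi a] = [set a] ->
    locally_connected_at Q a.
Proof.
move=> [_ [cQ _]] _ [[hY [_ lcZ]] [mono _]] a Qa fa.
have Za : Z (phi a) by case: mono => _ <- _; exists a.
exact: (monotone_locally_connected_at hY cQ mono Qa fa (lcZ _ Za)).
Qed.
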